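(* Assume the two-layer linear setting below, Assumptions (A3) and (A4), $\lambda_1\ge2\lambda_2$, and the learning-rate condition $\eta<\frac{nd}{(d+1)\lambda_1}$. Let $c_5$ be a constant with $0<c_5<\min\{2\beta,\frac{d}{d+1}\}$, and suppose $$m>\frac{3\eta c_2}{\frac{2d}{d+1}-2c_5}\quad\text{and}\quad m>\frac{\eta c_2}{2\beta-c_5}.$$ Then there is a constant $C$, depending only on $c_5$, $\eta$ and $\lambda_1/n$, such that $\|D(t)\|\le C\sqrt{nm}$ for all $t$.
   Context: Two-layer linear setting. Let $m$ be even and let $d,n\ge1$. The data matrix is $X=[x_1,\dots,x_n]\in\mathbb R^{d\times n}$ and the labels are $Y\in\{-1,1\}^n$, so that $\|Y\|=\sqrt n$. The network is $f(x)=\frac1{\sqrt m}A^\top Wx$ with $A\in\mathbb R^m$ and $W\in\mathbb R^{m\times d}$, trained by gradient descent $$A(t+1)=A(t)-\tfrac{2\eta}{n\sqrt m}W(t)XD(t),\qquad W(t+1)=W(t)-\tfrac{2\eta}{n\sqrt m}A(t)D(t)^\top X^\top$$ from the symmetric initialization, which satisfies $W(0)^\top W(0)=\frac md I_d$ and $F(0)=0$. Here $F=\frac1{\sqrt m}X^\top W^\top A$ is the output vector and $D=F-Y$ the residual. Define the Gram matrix $M(t)=\frac{2}{mn}\big(\|A(t)\|^2X^\top X+X^\top W(t)^\top W(t)X\big)$, the sharpness $\Lambda(t)=\lambda_{\max}(M(t))$, and $\Gamma(t)=\frac{2}{mn}\big(X^\top W(t)^\top W(t)X-\frac md X^\top X\big)$.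 $X^\top X$ has eigenvalues $\lambda_1\ge\lambda_2\ge\dots$, and $\lambda_1=\Theta(n)$. (A3): there is a constant $c_2>0$ with $\|\Gamma(t)\|\le c_2/m$ for all $t$. (A4): there is a constant $\beta>0$ with $\Lambda(t)\le\frac4\eta(1-\beta)$ for all $t$. *)

From HB Require Import structures.
From mathcomp Require Import all_boot all_order all_algebra.
From mathcomp Require Import reals.
Set Implicit Arguments. Unset Strict Implicit. Unset Printing Implicit Defensive.
Import Order.TTheory GRing.Theory Num.Theory.
Local Open Scope ring_scope.

Section TwoLayer.
Variable R : realType.

Definition vnorm (k : nat) (v : 'cV[R]_k) : R := Num.sqrt (\sum_i v i 0 ^+ 2).

(* s is the list of eigenvalues of the square matrix S, with multiplicity,
   sorted in nonincreasing order: s`_0 = lambda_1 >= s`_1 = lambda_2 >= ... *)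
Definition is_spectrum (k : nat) (S : 'M[R]_k) (s : seq R) : Prop :=
  [/\ sorted (fun x y => y <= x) s, size s = k &
      char_poly S = \prod_(x <- s) ('X - x%:P)].

Definition outF (m d n : nat) (X : 'M[R]_(d, n)) (A : 'cV[R]_m)
  (W : 'M[R]_(m, d)) : 'cV[R]_n :=
  (Num.sqrt (m%:R))^-1 *: (X^T *m W^T *m A).

Definition resid (m d n : nat) (X : 'M[R]_(d, n)) (Y : 'cV[R]_n)
  (A : 'cV[R]_m) (W : 'M[R]_(m, d)) : 'cV[R]_n :=
  outF X A W - Y.

Definition gramM (m d n : nat) (X : 'M[R]_(d, n)) (A : 'cV[R]_m)
  (W : 'M[R]_(m, d)) : 'M[R]_n :=
  (2 / (m%:R * n%:R)) *: (vnorm A ^+ 2 *: (X^T *m X) + X^T *m W^T *m W *m X).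

Definition GammaM (m d n : nat) (X : 'M[R]_(d, n)) (W : 'M[R]_(m, d))
  : 'M[R]_n :=
  (2 / (m%:R * n%:R)) *: (X^T *m W^T *m W *m X - (m%:R / d%:R) *: (X^T *m X)).

Definition lam_max (k : nat) (S : 'M[R]_k) (l : R) : Prop :=
  exists s, is_spectrum S s /\ s`_0 = l.

End TwoLayer.

(* The bound holds at every step t for static reasons: it only uses (A3), (A4) and
   the spectrum of X^T X at the current iterate (A, W).  Testing the sharpness on a
   top eigenvector of X^T X gives (2/(mn)) ||A||^2 lambda_1 <= Lambda <= 4/eta.  For
   f = X^T W^T A, (A3) bounds ||W X f||^2 by (c2 n/2 + m lambda_1/d) ||f||^2, and
   ||f||^2 = <W X f, A> <= ||W X f|| ||A|| then gives
   ||f||^2 <= (c2 n/2 + m lambda_1/d) ||A||^2.  The width conditions force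
   eta c2 <= m, hence ||F||^2 = ||f||^2/m <= nm (2/eta + n/(eta^2 lambda_1)), and
   ||D|| <= ||F|| + ||Y|| with ||Y|| = sqrt n. *)

From mathcomp Require Import all_boot all_order all_algebra.
From mathcomp Require Import reals complex.
From mathcomp Require Import ring lra.
Import Order.TTheory GRing.Theory Num.Theory.
Local Open Scope ring_scope.
Set Implicit Arguments. Unset Strict Implicit.

Section ColumnNorm.
Variables (R : realType) (p : nat).
Implicit Types u v : 'cV[R]_p.

Lemma dotmx_colE u v : (u^T *m v) 0 0 = \sum_i u i 0 * v i 0.
Proof. by rewrite mxE; apply: eq_bigr => i _; rewrite mxE. Qed.

Lemma vnorm_ge0 v : 0 <= vnorm v.
Proof. exact: sqrtr_ge0. Qed.

Lemma vnorm_sqr v : vnorm v ^+ 2 = (v^T *m v) 0 0.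
Proof.
rewrite /vnorm sqr_sqrtr ?dotmx_colE; last by apply: sumr_ge0 => i _; rewrite sqr_ge0.
by apply: eq_bigr => i _; rewrite expr2.
Qed.

Lemma vnorm_eq0 v : vnorm v = 0 -> v = 0.
Proof.
move=> /eqP; rewrite sqrtr_eq0 => v_le0.
have sqr_v_ge0 i : true -> 0 <= v i 0 ^+ 2 by rewrite sqr_ge0.
have /(psumr_eq0P sqr_v_ge0) v0 : \sum_i v i 0 ^+ 2 = 0.
  by apply/eqP; rewrite eq_le v_le0 sumr_ge0.
apply/matrixP => i j; rewrite (ord1 j) mxE; apply/eqP.
by rewrite -sqrf_eq0 v0.
Qed.

Lemma vnormZ (a : R) v : vnorm (a *: v) = `|a| * vnorm v.
Proof.
rewrite /vnorm -sqrtr_sqr -sqrtrM ?sqr_ge0 // mulr_sumr.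
by congr Num.sqrt; apply: eq_bigr => i _; rewrite mxE exprMn.
Qed.

Lemma vnormN v : vnorm (- v) = vnorm v.
Proof. by rewrite -scaleN1r vnormZ normrN1 mul1r. Qed.

Lemma dotmx_col_le u v : (u^T *m v) 0 0 <= vnorm u * vnorm v.
Proof.
have [/vnorm_eq0 ->|u0] := eqVneq (vnorm u) 0.
  by rewrite trmx0 mul0mx mxE mulr_ge0 ?vnorm_ge0.
have [/vnorm_eq0 ->|v0] := eqVneq (vnorm v) 0.
  by rewrite mulmx0 mxE mulr_ge0 ?vnorm_ge0.
set a := vnorm u; set b := vnorm v.
have ab_gt0 : 0 < a * b by rewrite mulr_gt0 // lt_def ?u0 ?v0 vnorm_ge0.
(* 0 <= || b u - a v ||^2 with a = ||u||, b = ||v|| *)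
have : 0 <= \sum_i (b * u i 0 - a * v i 0) ^+ 2 by apply: sumr_ge0 => i _; rewrite sqr_ge0.
have -> : \sum_i (b * u i 0 - a * v i 0) ^+ 2 =
    b ^+ 2 * (u^T *m u) 0 0 - 2 * a * b * (u^T *m v) 0 0 + a ^+ 2 * (v^T *m v) 0 0.
  rewrite !dotmx_colE !mulr_sumr -!sumrB -big_split /=.
  by apply: eq_bigr => i _; ring.
rewrite -!vnorm_sqr -/a -/b; nra.
Qed.

Lemma vnormB_le u v : vnorm (u - v) <= vnorm u + vnorm v.
Proof.
rewrite -(ler_pXn2r (_ : 0 < 2)%N) ?nnegrE ?addr_ge0 ?vnorm_ge0 //.
have := dotmx_col_le u (- v); rewrite vnormN.
have -> : vnorm (u - v) ^+ 2 =
    vnorm u ^+ 2 + 2 * (u^T *m (- v)) 0 0 + vnorm v ^+ 2.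
  rewrite !vnorm_sqr !dotmx_colE mulr_sumr -!big_split /=.
  by apply: eq_bigr => i _; rewrite !mxE; ring.
nra.
Qed.

End ColumnNorm.

Lemma vnorm_mulmx_sqr (R : realType) k p (B : 'M[R]_(k, p)) (v : 'cV[R]_p) :
  vnorm (B *m v) ^+ 2 = (v^T *m (B^T *m B) *m v) 0 0.
Proof. by rewrite vnorm_sqr trmx_mul !mulmxA. Qed.

Lemma char_poly_similar (F : comNzRingType) k (P' A P : 'M[F]_k) :
  P' *m P = 1%:M -> char_poly (P' *m A *m P) = char_poly A.
Proof.
move=> P'P; rewrite /char_poly.
have -> : char_poly_mx (P' *m A *m P) =
    map_mx polyC P' *m char_poly_mx A *m map_mx polyC P.
  rewrite /char_poly_mx mulmxBr mulmxBl !map_mxM; congr (_ - _).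
  by rewrite mul_mx_scalar -scalemxAl -map_mxM P'P map_mx1 scalemx1.
by rewrite !det_mulmx mulrAC -det_mulmx -map_mxM P'P map_mx1 det1 mul1r.
Qed.

Lemma sorted_ge_head (R : numDomainType) (s : seq R) x :
  sorted (fun x y => y <= x) s -> x \in s -> x <= s`_0.
Proof.
case: s => [//|a s] /= s_sorted; rewrite inE => /orP [/eqP -> //|x_in_s].
exact: (allP (order_path_min (fun p q r qp rq => le_trans rq qp) s_sorted)).
Qed.

Section RealSymmetricSpectrum.
Variable R : realType.
Local Notation toC := (real_complex R).
Local Notation cmx M := (map_mx toC M).
Local Open Scope sesquilinear_scope.

Lemma conj_cmx k l (M : 'M[R]_(k, l)) : map_mx Num.conj (cmx M) = cmx M.
Proof.
apply/matrixP => i j; rewrite !mxE; apply: conj_Creal.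
by apply/complex_realP; eexists.
Qed.

Lemma realsym_unitary_diag k (S : 'M[R]_k) : S^T = S ->
  exists (d : 'rV[R]_k) (Q : 'M[R[i]]_k),
    Q ^t* *m Q = 1%:M /\ cmx S = Q ^t* *m diag_mx (cmx d) *m Q.
Proof.
move=> S_sym.
have S_herm : cmx S \is hermsymmx.
  apply: realsym_hermsym.
    by apply/is_hermitianmxP; rewrite expr0 scale1r map_mx_id // map_trmx S_sym.
  by apply/mxOverP => i j; rewrite mxE; apply/complex_realP; eexists.
have /orthomx_spectralP S_eq := hermitian_normalmx S_herm.
set Q := spectralmx (cmx S).
have QV : invmx Q = Q ^t* by rewrite invmx_unitary // spectral_unitarymx.
exists (map_mx (@complex.Re R) (spectral_diag (cmx S))), Q; split.
  by rewrite -QV mulVmx // spectral_unit.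
rewrite {1}S_eq QV; congr (_ *m diag_mx _ *m _).
apply/matrixP => i j; rewrite !mxE RRe_real //.
exact: (mxOverP (hermitian_spectral_diag_real S_herm)).
Qed.

Section UnitaryDiagonalization.
Variables (k : nat) (S : 'M[R]_k) (d : 'rV[R]_k) (Q : 'M[R[i]]_k).
Hypotheses (Q_unitary : Q ^t* *m Q = 1%:M)
           (S_diag : cmx S = Q ^t* *m diag_mx (cmx d) *m Q).

Lemma unitary_diag_char_poly :
  char_poly S = \prod_(x <- [seq d 0 i | i <- enum 'I_k]) ('X - x%:P).
Proof.
rewrite big_map big_enum; apply: (@map_poly_inj _ _ toC).
rewrite map_char_poly S_diag char_poly_similar // char_poly_trig ?diag_mx_is_trig //.
rewrite rmorph_prod; apply: eq_bigr => i _.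
by rewrite /= map_polyXsubC !mxE eqxx mulr1n.
Qed.

Lemma unitary_diag_rayleigh L : (forall i, d 0 i <= L) ->
  forall v : 'cV[R]_k, (v^T *m S *m v) 0 0 <= L * (v^T *m v) 0 0.
Proof.
move=> d_le v; rewrite -lecR rmorphM /=.
have -> : toC ((v^T *m S *m v) 0 0) = (cmx v^T *m cmx S *m cmx v) 0 0.
  by rewrite -!map_mxM [RHS]mxE.
have -> : toC ((v^T *m v) 0 0) = (cmx v^T *m cmx v) 0 0.
  by rewrite -!map_mxM [RHS]mxE.
set w := Q *m cmx v.
have adj_w : w ^t* = cmx v^T *m Q ^t* by rewrite trmx_mul map_mxM map_trmx conj_cmx.
have -> : cmx v^T *m cmx S *m cmx v = w ^t* *m diag_mx (cmx d) *m w.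
  by rewrite S_diag adj_w /w !mulmxA.
have -> : cmx v^T *m cmx v = w ^t* *m w.
  by rewrite adj_w /w mulmxA -(mulmxA _ (Q ^t*)) Q_unitary mulmx1.
rewrite mul_mx_diag !mxE mulr_sumr; apply: ler_sum => j _.
rewrite !mxE -mulrA mulrCA; apply: ler_wpM2r; last by rewrite lecR.
by rewrite mulrC mul_conjC_ge0.
Qed.

End UnitaryDiagonalization.

Lemma symmetric_spectrum_exists k (S : 'M[R]_k) : S^T = S -> exists s, is_spectrum S s.
Proof.
move=> /realsym_unitary_diag [d [Q [QQ S_diag]]].
exists (sort (fun x y => y <= x) [seq d 0 i | i <- enum 'I_k]); split.
- by apply: sort_sorted => x y; exact: le_total.
- by rewrite size_sort size_map size_enum_ord.
- rewrite (unitary_diag_char_poly QQ S_diag); apply: perm_big.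
  by rewrite perm_sym perm_sort.
Qed.

Lemma symmetric_spectrum_rayleigh k (S : 'M[R]_k) s : S^T = S -> is_spectrum S s ->
  forall v : 'cV[R]_k, (v^T *m S *m v) 0 0 <= s`_0 * (v^T *m v) 0 0.
Proof.
move=> /realsym_unitary_diag [d [Q [QQ S_diag]]] [s_sorted _ S_char].
apply: (unitary_diag_rayleigh QQ S_diag) => i; apply: sorted_ge_head => //.
have : root (char_poly S) (d 0 i).
  by rewrite (unitary_diag_char_poly QQ S_diag) root_prod_XsubC map_f ?mem_enum.
by rewrite S_char root_prod_XsubC.
Qed.

Lemma symmetric_spectrum_head_eigenvector k (S : 'M[R]_k) s :
  S^T = S -> is_spectrum S s -> (0 < k)%N ->
  exists2 u : 'cV[R]_k, u != 0 & S *m u = s`_0 *: u.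
Proof.
move=> S_sym [_ s_size S_char] k_gt0.
have : root (char_poly S) s`_0 by rewrite S_char root_prod_XsubC mem_nth ?s_size.
rewrite -eigenvalue_root_char => /eigenvalueP [v vS v_neq0].
exists v^T; first by rewrite trmx_eq0.
by rewrite -{1}S_sym -trmx_mul vS linearZ.
Qed.

End RealSymmetricSpectrum.

Lemma output_sqr_bound (R : realFieldType) (M N D l e c2 aa ff : R) :
  0 < M -> 0 < N -> 1 <= D -> 0 < l -> 0 < e -> 0 <= aa ->
  e * c2 <= M -> 2 / (M * N) * (aa * l) <= 4 / e ->
  ff <= (c2 * N / 2 + M * l / D) * aa ->
  ff / M <= (2 / e + 1 / (e ^+ 2 * (l / N))) * (N * M).
Proof.
move=> M_gt0 N_gt0 D_ge1 l_gt0 e_gt0 aa_ge0 c2_le aa_l_le ff_le.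
have aa_le : aa <= 2 * M * N / (e * l).
  have -> : aa = 2 / (M * N) * (aa * l) * (M * N / (2 * l)) by field; rewrite ?gt_eqF.
  have -> : 2 * M * N / (e * l) = 4 / e * (M * N / (2 * l)) by field; rewrite ?gt_eqF.
  by apply: ler_wpM2r aa_l_le; rewrite divr_ge0 ?mulr_ge0 ?ltW.
have c2_term : c2 * N / 2 <= M * (N / (2 * e)).
  have -> : c2 * N / 2 = e * c2 * (N / (2 * e)) by field; rewrite gt_eqF.
  by apply: ler_wpM2r c2_le; rewrite divr_ge0 ?mulr_ge0 ?ltW.
have l_term : M * l / D <= M * l.
  by rewrite ler_pdivrMr ?(lt_le_trans ltr01) // ler_peMr // mulr_ge0 ?ltW.
rewrite ler_pdivrMr //; apply: le_trans ff_le _.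
apply: le_trans (_ : M * (N / (2 * e) + l) * aa <= _).
  by apply: ler_wpM2r => //; rewrite mulrDr lerD.
have -> : (2 / e + 1 / (e ^+ 2 * (l / N))) * (N * M) * M =
    M * (N / (2 * e) + l) * (2 * M * N / (e * l)) by field; rewrite ?gt_eqF.
by apply: ler_wpM2l aa_le; rewrite mulr_ge0 ?addr_ge0 ?divr_ge0 ?mulr_ge0 ?ltW.
Qed.

Lemma gt0_of_lt_div (R : realFieldType) (e p q : R) : 0 < e -> e < p / q -> 0 <= p -> 0 < q.
Proof.
move=> e_gt0 e_lt p_ge0; rewrite ltNge; apply/negP => q_le0.
have : p / q <= 0 by rewrite mulr_ge0_le0 // invr_le0.
lra.
Qed.

Lemma width_condition_le (R : realFieldType) (M e c2 k c5 : R) :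
  0 < e * c2 -> 0 <= k -> 0 < c5 -> c5 < k / (k + 1) ->
  3 * e * c2 / (2 * k / (k + 1) - 2 * c5) < M -> e * c2 <= M.
Proof.
move=> ec2_gt0 k_ge0 c5_gt0 c5_lt.
have k1_le : k / (k + 1) <= 1 by rewrite ler_pdivrMr ?mul1r; lra.
set den := 2 * k / (k + 1) - 2 * c5.
have den_eq : den = 2 * (k / (k + 1)) - 2 * c5 by rewrite /den mulrA.
have den_gt0 : 0 < den by lra.
rewrite ltr_pdivrMr // -mulrA => M_gt.
have M_gt0 : 0 < M.
  by rewrite -(pmulr_lgt0 _ den_gt0); apply: lt_trans M_gt; rewrite mulr_gt0.
have : M * den <= M * 2 by apply: ler_wpM2l; lra.
lra.
Qed.

Section TwoLayerBounds.
Variables (R : realType) (m d n : nat) (X : 'M[R]_(d, n)).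
Local Notation M := (m%:R : R).
Local Notation N := (n%:R : R).
Local Notation K := (X^T *m X).

Implicit Types (a : 'cV[R]_m) (W : 'M[R]_(m, d)) (v : 'cV[R]_n).

Lemma gramM_sym a W : (gramM X a W)^T = gramM X a W.
Proof. by rewrite /gramM !linearZ /= linearD /= linearZ /= !trmx_mul !trmxK !mulmxA. Qed.

Lemma gramM_quad a W v :
  (v^T *m gramM X a W *m v) 0 0 =
  2 / (M * N) * (vnorm a ^+ 2 * vnorm (X *m v) ^+ 2 + vnorm (W *m X *m v) ^+ 2).
Proof.
rewrite !vnorm_mulmx_sqr !trmx_mul !mulmxA /gramM.
by rewrite -scalemxAr -scalemxAl mulmxDr mulmxDl -scalemxAr -scalemxAl !mxE !mulmxA.
Qed.

Lemma GammaM_quad W v :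
  (v^T *m GammaM X W *m v) 0 0 =
  2 / (M * N) * (vnorm (W *m X *m v) ^+ 2 - M / d%:R * vnorm (X *m v) ^+ 2).
Proof.
rewrite !vnorm_mulmx_sqr !trmx_mul !mulmxA /GammaM.
by rewrite -scalemxAr -scalemxAl mulmxBr mulmxBl -scalemxAr -scalemxAl !mxE !mulmxA.
Qed.

Lemma lam_max_gramM_ge a W L l (u : 'cV[R]_n) :
  lam_max (gramM X a W) L -> u != 0 -> K *m u = l *: u ->
  2 / (M * N) * (vnorm a ^+ 2 * l) <= L.
Proof.
move=> [s [s_spec <-]] u_neq0 Ku.
have u_gt0 : 0 < vnorm u ^+ 2.
  rewrite exprn_gt0 // lt_def vnorm_ge0 andbT.
  by apply: contra u_neq0 => /eqP/vnorm_eq0 ->.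
have Xu : vnorm (X *m u) ^+ 2 = l * vnorm u ^+ 2.
  by rewrite vnorm_mulmx_sqr -mulmxA Ku -scalemxAr mxE vnorm_sqr.
have := symmetric_spectrum_rayleigh (gramM_sym a W) s_spec u.
rewrite gramM_quad Xu -vnorm_sqr => ray.
rewrite -(ler_pM2r u_gt0); apply: le_trans ray.
rewrite -[_ * _ * vnorm u ^+ 2]mulrA; apply: ler_wpM2l; first by rewrite divr_ge0 ?mulr_ge0 ?ler0n.
by rewrite -mulrA lerDl sqr_ge0.
Qed.

Section GammaBound.
Variables (c2 l : R) (W : 'M[R]_(m, d)).
Hypotheses (m_gt0 : (0 < m)%N) (n_gt0 : (0 < n)%N) (c2_ge0 : 0 <= c2) (l_ge0 : 0 <= l).
Hypothesis Gamma_le : forall v, vnorm (GammaM X W *m v) <= c2 / M * vnorm v.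
Hypothesis X_le : forall v, vnorm (X *m v) ^+ 2 <= l * vnorm v ^+ 2.

Lemma vnorm_WXv_le v :
  vnorm (W *m X *m v) ^+ 2 <= (c2 * N / 2 + M * l / d%:R) * vnorm v ^+ 2.
Proof.
have M_gt0 : 0 < M by rewrite ltr0n.
have N_gt0 : 0 < N by rewrite ltr0n.
have : (v^T *m GammaM X W *m v) 0 0 <= c2 / M * vnorm v ^+ 2.
  rewrite -mulmxA; apply: le_trans (dotmx_col_le _ _) _.
  by rewrite expr2 mulrA mulrC; apply: ler_wpM2r; rewrite ?vnorm_ge0 ?Gamma_le.
rewrite GammaM_quad -ler_pdivlMl ?divr_gt0 ?mulr_gt0 //.
have -> : (2 / (M * N))^-1 * (c2 / M * vnorm v ^+ 2) = c2 * N / 2 * vnorm v ^+ 2.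
  by field; rewrite ?gt_eqF.
have : M / d%:R * vnorm (X *m v) ^+ 2 <= M * l / d%:R * vnorm v ^+ 2.
  have -> : M * l / d%:R * vnorm v ^+ 2 = M / d%:R * (l * vnorm v ^+ 2) by ring.
  by apply: ler_wpM2l; rewrite ?divr_ge0 ?ler0n ?X_le.
rewrite mulrDl; lra.
Qed.

Lemma vnorm_XWa_le a :
  vnorm (X^T *m W^T *m a) ^+ 2 <= (c2 * N / 2 + M * l / d%:R) * vnorm a ^+ 2.
Proof.
set f := X^T *m W^T *m a; set k := c2 * N / 2 + M * l / d%:R.
have k_ge0 : 0 <= k by rewrite addr_ge0 ?mulr_ge0 ?invr_ge0 ?ler0n.
have f_le : vnorm f ^+ 2 <= vnorm (W *m X *m f) * vnorm a.
  have -> : vnorm f ^+ 2 = ((W *m X *m f)^T *m a) 0 0.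
    by rewrite vnorm_sqr {2}/f !trmx_mul !mulmxA.
  exact: dotmx_col_le.
have [f0|f_gt0] := eqVneq (vnorm f ^+ 2) 0.
  by rewrite f0 mulr_ge0 ?sqr_ge0.
have {f_gt0}f_gt0 : 0 < vnorm f ^+ 2 by rewrite lt_def f_gt0 sqr_ge0.
rewrite -(ler_pM2l f_gt0); apply: le_trans (_ : (vnorm (W *m X *m f) * vnorm a) ^+ 2 <= _).
  by rewrite expr2 ler_pM ?sqr_ge0.
have -> : vnorm f ^+ 2 * (k * vnorm a ^+ 2) = k * vnorm f ^+ 2 * vnorm a ^+ 2 by ring.
by rewrite exprMn; apply: ler_wpM2r; rewrite ?sqr_ge0 ?vnorm_WXv_le.
Qed.

End GammaBound.

Lemma vnorm_outF a W : vnorm (outF X a W) = vnorm (X^T *m W^T *m a) / Num.sqrt M.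
Proof. by rewrite /outF vnormZ ger0_norm ?invr_ge0 ?sqrtr_ge0 // mulrC. Qed.

Lemma vnorm_signs (Y : 'cV[R]_n) :
  (forall i, Y i 0 = 1 \/ Y i 0 = -1) -> vnorm Y = Num.sqrt N.
Proof.
move=> Y_sign; rewrite /vnorm (eq_bigr (fun=> 1)) ?sumr_const ?card_ord //.
by move=> i _; case: (Y_sign i) => ->; rewrite ?sqrrN expr1n.
Qed.

End TwoLayerBounds.

Section ResidualBound.
Variables (R : realType) (m d n : nat) (X : 'M[R]_(d, n)) (Y : 'cV[R]_n).
Variables (eta c2 l : R) (a : 'cV[R]_m) (W : 'M[R]_(m, d)) (u : 'cV[R]_n).
Local Notation M := (m%:R : R).
Local Notation N := (n%:R : R).
Hypotheses (m_gt0 : (0 < m)%N) (d_gt0 : (0 < d)%N) (n_gt0 : (0 < n)%N).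
Hypotheses (eta_gt0 : 0 < eta) (l_gt0 : 0 < l) (c2_ge0 : 0 <= c2) (eta_c2_le : eta * c2 <= M).
Hypothesis Y_sign : forall i, Y i 0 = 1 \/ Y i 0 = -1.
Hypothesis Gamma_le : forall v, vnorm (GammaM X W *m v) <= c2 / M * vnorm v.
Hypothesis X_le : forall v, vnorm (X *m v) ^+ 2 <= l * vnorm v ^+ 2.
Hypotheses (u_neq0 : u != 0) (Xu : X^T *m X *m u = l *: u).
Hypothesis sharpness_le : forall L, lam_max (gramM X a W) L -> L <= 4 / eta.

Lemma vnorm_outF_sqr_le :
  vnorm (outF X a W) ^+ 2 <= (2 / eta + 1 / (eta ^+ 2 * (l / N))) * (N * M).
Proof.
have [s s_spec] := symmetric_spectrum_exists (gramM_sym X a W).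
have lam_s : lam_max (gramM X a W) s`_0 by exists s.
rewrite vnorm_outF expr_div_n (sqr_sqrtr (ler0n R m)).
apply: (output_sqr_bound (D := d%:R) (c2 := c2) (aa := vnorm a ^+ 2)); rewrite ?ltr0n ?ler1n ?sqr_ge0 //.
- exact: le_trans (lam_max_gramM_ge lam_s u_neq0 Xu) (sharpness_le lam_s).
- exact (vnorm_XWa_le m_gt0 n_gt0 c2_ge0 (ltW l_gt0) Gamma_le X_le a).
Qed.

Lemma vnorm_resid_le :
  vnorm (resid X Y a W) <=
  (Num.sqrt (2 / eta + 1 / (eta ^+ 2 * (l / N))) + 1) * Num.sqrt (N * M).
Proof.
have Q_ge0 : 0 <= 2 / eta + 1 / (eta ^+ 2 * (l / N)).
  apply: addr_ge0; apply: divr_ge0; rewrite ?ler0n ?ler01 ?(ltW eta_gt0) //.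
  by rewrite mulr_ge0 ?sqr_ge0 // divr_ge0 ?ler0n ?(ltW l_gt0).
rewrite mulrDl (mul1r (Num.sqrt _)); apply: le_trans (vnormB_le _ _) _; apply: lerD.
  rewrite -sqrtrM // -(ler_pXn2r (_ : 0 < 2)%N) ?nnegrE ?vnorm_ge0 ?sqrtr_ge0 //.
  rewrite [Z in _ <= Z]sqr_sqrtr ?vnorm_outF_sqr_le //.
  by apply: mulr_ge0; [exact: Q_ge0 | rewrite mulr_ge0 ?ler0n].
rewrite vnorm_signs //; apply: ler_wsqrtr.
by rewrite ler_peMr ?ler0n ?ler1n.
Qed.

End ResidualBound.

Unset Implicit Arguments. Set Strict Implicit.

Theorem mainTheorem7 (R : realType) :
  exists C : R -> R -> R -> R,
  forall (m d n : nat) (X : 'M[R]_(d, n)) (Y : 'cV[R]_n)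
    (A : nat -> 'cV[R]_m) (W : nat -> 'M[R]_(m, d))
    (eta beta c2 c5 : R) (lam : seq R),
  ~~ odd m -> (0 < d)%N -> (0 < n)%N ->
  (forall i, Y i 0 = 1 \/ Y i 0 = -1) ->
  0 < eta ->
  (* gradient descent *)
  (forall t, A t.+1 = A t - (2 * eta / (n%:R * Num.sqrt m%:R)) *:
                        (W t *m X *m resid X Y (A t) (W t))) ->
  (forall t, W t.+1 = W t - (2 * eta / (n%:R * Num.sqrt m%:R)) *:
                        (A t *m (resid X Y (A t) (W t))^T *m X^T)) ->
  (* symmetric initialization *)
  (W 0)^T *m W 0 = (m%:R / d%:R)%:M ->
  outF X (A 0) (W 0) = 0 ->
  (* eigenvalues of X^T X, sorted nonincreasingly: lam`_0 = lambda_1, lam`_1 = lambda_2 *)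
  is_spectrum (X^T *m X) lam ->
  (* (A3) *)
  0 < c2 ->
  (forall t (v : 'cV[R]_n), vnorm (GammaM X (W t) *m v) <= c2 / m%:R * vnorm v) ->
  (* (A4) *)
  0 < beta ->
  (forall t l, lam_max (gramM X (A t) (W t)) l -> l <= 4 / eta * (1 - beta)) ->
  2 * lam`_1 <= lam`_0 ->
  eta < n%:R * d%:R / ((d%:R + 1) * lam`_0) ->
  0 < c5 -> c5 < Num.min (2 * beta) (d%:R / (d%:R + 1)) ->
  m%:R > 3 * eta * c2 / (2 * d%:R / (d%:R + 1) - 2 * c5) ->
  m%:R > eta * c2 / (2 * beta - c5) ->
  forall t, vnorm (resid X Y (A t) (W t)) <= C c5 eta (lam`_0 / n%:R) * Num.sqrt (n%:R * m%:R).
Proof.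
exists (fun _ e r => Num.sqrt (2 / e + 1 / (e ^+ 2 * r)) + 1).
move=> m d n X Y A W eta beta c2 c5 lam _ d_gt0 n_gt0 Y_sign eta_gt0 _ _ _ _
  lam_spec c2_gt0 Gamma_le beta_gt0 sharpness_le _ eta_lt c5_gt0 c5_lt m_wide _ t.
have K_sym : (X^T *m X)^T = X^T *m X by rewrite trmx_mul trmxK.
have l_gt0 : 0 < lam`_0.
  have := gt0_of_lt_div eta_gt0 eta_lt; rewrite mulr_ge0 ?ler0n // => /(_ isT).
  by rewrite pmulr_rgt0 // ltr_wpDl ?ler0n.
have eta_c2_le : eta * c2 <= m%:R.
  move: c5_lt; rewrite lt_min => /andP [_ c5_lt].
  by apply: width_condition_le m_wide; rewrite ?mulr_gt0 ?ler0n.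
have m_gt0 : (0 < m)%N by rewrite -(ltr0n R); apply: lt_le_trans eta_c2_le; rewrite mulr_gt0.
have [u u_neq0 Ku] := symmetric_spectrum_head_eigenvector K_sym lam_spec n_gt0.
apply: (vnorm_resid_le m_gt0 d_gt0 n_gt0 eta_gt0 l_gt0 (ltW c2_gt0) eta_c2_le Y_sign
          (Gamma_le t) _ u_neq0 Ku).
- by move=> v; rewrite vnorm_mulmx_sqr !vnorm_sqr symmetric_spectrum_rayleigh.
- move=> L /sharpness_le /le_trans; apply.
  rewrite ler_piMr ?divr_ge0 ?ler0n ?(ltW eta_gt0) //; lra.
Qed.
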